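(* For all nonnegative integers $k,d,i,j$ with $k>0$, $$F_{\,kd+id+j(i+1)(2(k-1)d+1),\;d+j(2(k-1)d+1)}=1.$$
   Context: Define maps $G,S:\mathbb Z^2\to\mathbb Z^2$ by $G(x,y)=(x+y,y)$ and $S(x,y)=(3x-2y+1,\,2x-y+1)$. Define the array $(F_{n,k})_{n,k\ge 0}$ by $F_{0,0}=1$ and, for $(n,k)\neq(0,0)$, $F_{n,k}$ is the number of finite words $w=w_1w_2\cdots w_m$ ($m\ge 0$) over the alphabet $\{G,S\}$ with $w_1\circ w_2\circ\cdots\circ w_m(1,1)=(n,k)$ (the empty word acts as the identity). Equivalently: start with all entries $0$, set $F_{0,0}=1$ and $F_{1,1}=1$, and thereafter, whenever an entry $F_{n,k}$ with $n\ge 1$ changes its value, increase $F_{n+k,k}$ and $F_{3n+1-2k,\,2n+1-k}$ by $1$. *)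

From Stdlib Require Import ZArith List.
Import ListNotations.
Open Scope Z_scope.

Definition Gmap (p : Z * Z) : Z * Z := (fst p + snd p, snd p).
Definition Smap (p : Z * Z) : Z * Z :=
  (3 * fst p - 2 * snd p + 1, 2 * fst p - snd p + 1).

Inductive letter : Type := LG | LS.

Definition act (l : letter) : Z * Z -> Z * Z :=
  match l with LG => Gmap | LS => Smap end.

Definition eval_word (w : list letter) : Z * Z :=
  fold_right (fun l p => act l p) (1, 1) w.

Definition has_card (P : list letter -> Prop) (c : nat) : Prop :=
  exists ws : list (list letter),
    NoDup ws /\ length ws = c /\ (forall w, In w ws <-> P w).

Definition F_is (n k : nat) (c : nat) : Prop :=
  if ((n =? 0)%nat && (k =? 0)%nat)%bool then c = 1%nat
  else has_card (fun w => eval_word w = (Z.of_nat n, Z.of_nat k)) c.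

(* The map w |-> w(1,1) is injective: on the orbit of (1,1) every point other
   than (1,1) itself has 1 <= y <= x, and the outermost letter of a word is
   read off from its value, since G lands in the region 2y <= x and S in the
   region 2x + 2 <= 3y.  Hence F_{n,k} = 1 as soon as some word reaches (n,k).
   As G fixes (0,0) and S(0,0) = (1,1), the same holds for words applied to
   (0,0), which also accounts for F_{0,0} = 1; and G^i S^j G^(k-1) S^d maps
   (0,0) to the point of the theorem. *)

From Stdlib Require Import Arith ZArith Lia List.
Import ListNotations.

Definition eval_word_from (p : Z * Z) (w : list letter) : Z * Z :=
  fold_right act p w.

Lemma eval_word_from_cons p l w :
  eval_word_from p (l :: w) = act l (eval_word_from p w).
Proof. reflexivity. Qed.

Lemma eval_word_from_repeat_app p l n w :
  eval_word_from p (repeat l n ++ w) = Nat.iter n (act l) (eval_word_from p w).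
Proof.
  induction n as [|n IH]; [reflexivity|].
  cbn [repeat app]; simpl Nat.iter. now rewrite eval_word_from_cons, IH.
Qed.

Lemma iter_Gmap n x y : Nat.iter n Gmap (x, y) = (x + Z.of_nat n * y, y).
Proof.
  induction n as [|n IH]; simpl Nat.iter.
  - f_equal; lia.
  - rewrite IH. unfold Gmap; cbn [fst snd]. f_equal; lia.
Qed.

Lemma iter_Smap n x y :
  Nat.iter n Smap (x, y) =
  (x + Z.of_nat n * (2 * (x - y) + 1), y + Z.of_nat n * (2 * (x - y) + 1)).
Proof.
  induction n as [|n IH]; simpl Nat.iter.
  - f_equal; lia.
  - rewrite IH. unfold Smap; cbn [fst snd]. f_equal; lia.
Qed.

Lemma act_inj l p q : act l p = act l q -> p = q.
Proof.
  destruct p as [a b], q as [c e], l; cbn [act]; unfold Gmap, Smap; cbn [fst snd];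
    intros [E1 E2]%pair_equal_spec; f_equal; lia.
Qed.

Lemma eval_word_bounds w : 1 <= snd (eval_word w) <= fst (eval_word w).
Proof.
  induction w as [|l w IH]; [cbn; lia|].
  change (eval_word (l :: w)) with (act l (eval_word w)).
  destruct (eval_word w) as [x y], l; cbn [act]; unfold Gmap, Smap;
    cbn [fst snd] in *; lia.
Qed.

Definition outer_letter (p : Z * Z) : option letter :=
  if ((fst p =? 1) && (snd p =? 1))%bool then None
  else if 2 * snd p <=? fst p then Some LG else Some LS.

Lemma outer_letter_eval_word w : outer_letter (eval_word w) = hd_error w.
Proof.
  destruct w as [|l w]; [reflexivity|].
  pose proof (eval_word_bounds w) as B.
  change (eval_word (l :: w)) with (act l (eval_word w)).
  destruct (eval_word w) as [x y], l; cbn [act]; unfold outer_letter, Gmap, Smap;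
    cbn [fst snd hd_error] in *;
    repeat match goal with
           | |- context [?a =? ?b] => destruct (Z.eqb_spec a b)
           | |- context [?a <=? ?b] => destruct (Z.leb_spec a b)
           end; cbn; try reflexivity; lia.
Qed.

Lemma eval_word_inj w1 w2 : eval_word w1 = eval_word w2 -> w1 = w2.
Proof.
  revert w2; induction w1 as [|l w1 IH]; intros w2 E;
    pose proof (f_equal outer_letter E) as O;
    rewrite !outer_letter_eval_word in O;
    destruct w2 as [|l' w2]; cbn [hd_error] in O; try discriminate; [reflexivity|].
  injection O as <-. f_equal. apply IH, (act_inj l), E.
Qed.

Lemma has_card_singleton (P : list letter -> Prop) w0 :
  (forall w, P w <-> w = w0) -> has_card P 1.
Proof.
  intro HP. exists [w0]. split; [repeat constructor; easy|split; [reflexivity|]].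
  intro w. rewrite HP. cbn. split; [intros [->|[]]|intros ->; left]; reflexivity.
Qed.

Lemma F_is_one_of_eval_word n k w :
  eval_word w = (Z.of_nat n, Z.of_nat k) -> F_is n k 1.
Proof.
  intro Hw. unfold F_is.
  destruct ((n =? 0)%nat && (k =? 0)%nat)%bool; [reflexivity|].
  apply (has_card_singleton _ w). intro w'. split.
  - intro Hw'. apply eval_word_inj. congruence.
  - now intros ->.
Qed.

Lemma eval_word_from_origin w :
  eval_word_from (0, 0) w <> (0, 0) ->
  exists w', eval_word w' = eval_word_from (0, 0) w.
Proof.
  induction w as [|l w IH]; intro Hw; [easy|].
  rewrite eval_word_from_cons in *.
  assert (dec : forall p : Z * Z, {p = (0, 0)} + {p <> (0, 0)})
    by (decide equality; apply Z.eq_dec).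
  destruct (dec (eval_word_from (0, 0) w)) as [E|E].
  - rewrite E in *. destruct l; [easy|]. now exists [].
  - destruct (IH E) as [w' Hw']. exists (l :: w').
    change (eval_word (l :: w')) with (act l (eval_word w')). now rewrite Hw'.
Qed.

Lemma F_is_one_of_eval_word_from_origin n k w :
  eval_word_from (0, 0) w = (Z.of_nat n, Z.of_nat k) -> F_is n k 1.
Proof.
  intro Hw.
  destruct (Nat.eq_dec n 0) as [->|Hn];
    [destruct (Nat.eq_dec k 0) as [->|Hk]; [reflexivity|]|].
  all: destruct (eval_word_from_origin w) as [w' Hw'];
    [rewrite Hw; intros [En Ek]%pair_equal_spec; lia|].
  all: apply (F_is_one_of_eval_word _ _ w'); congruence.
Qed.

Open Scope nat_scope.

Theorem theorem14 (k d i j : nat) (hk : 0 < k) :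
  F_is (k * d + i * d + j * (i + 1) * (2 * (k - 1) * d + 1))
       (d + j * (2 * (k - 1) * d + 1)) 1.
Proof.
  apply (F_is_one_of_eval_word_from_origin _ _
           (repeat LG i ++ repeat LS j ++ repeat LG (k - 1) ++ repeat LS d)).
  rewrite <- (app_nil_r (repeat LS d)), !eval_word_from_repeat_app.
  cbn [act eval_word_from fold_right].
  rewrite iter_Smap, iter_Gmap, iter_Smap, iter_Gmap.
  destruct k as [|k]; [lia|]. rewrite Nat.sub_succ, Nat.sub_0_r.
  f_equal; nia.
Qed.
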